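(* Let $\mathfrak A=\langle A,f,g\rangle$ be a betweenness algebra. Then for all ultrafilters $\mathcal U,\mathcal U_1,\mathcal U_2,\mathcal U_3$ of $A$: (i) $Q_f(\mathcal U,\mathcal U,\mathcal U)$; (ii) $Q_f(\mathcal U_1,\mathcal U_2,\mathcal U_3)\Rightarrow Q_f(\mathcal U_3,\mathcal U_2,\mathcal U_1)$; (iii) $S_g(\mathcal U_1,\mathcal U_2,\mathcal U_3)\Rightarrow S_g(\mathcal U_3,\mathcal U_2,\mathcal U_1)$; (iv) $Q_f(\mathcal U_1,\mathcal U_2,\mathcal U_3)\Rightarrow Q_f(\mathcal U_1,\mathcal U_1,\mathcal U_2)$; (v) $Q_f(\mathcal U_1,\mathcal U_2,\mathcal U_3)\wedge S_g(\mathcal U_1,\mathcal U_3,\mathcal U_2)\Rightarrow \mathcal U_2=\mathcal U_3$. If $\mathfrak A$ is a strong betweenness algebra, then additionally $Q_f(\mathcal U_1,\mathcal U_1,\mathcal U_2)$ for all ultrafilters $\mathcal U_1,\mathcal U_2$. If $\mathfrak A$ is a weak betweenness algebra, then $S_g(\mathcal U_1,\mathcal U_2,\mathcal U_1)\Rightarrow\mathcal U_1=\mathcal U_2$ for all ultrafilters $\mathcal U_1,\mathcal U_2$.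
   Context: A PS-algebra is $\langle A,f,g\rangle$, $A$ a Boolean algebra with at least two elements (operations $+,\cdot,-,0,1$), $f,g\colon A^2\to A$, $f$ normal ($f(x,y)=0$ if $x=0$ or $y=0$) and additive in each argument, $g$ co-normal ($g(x,y)=1$ if $x=0$ or $y=0$) and co-additive in each argument ($g(x+x',y)=g(x,y)g(x',y)$, $g(x,y+y')=g(x,y)g(x,y')$). Axioms (for all $x,y,z,a,b$): (ABT0) $x\leq f(x,x)$; (ABT1$_f$) $f(x,y)\leq f(y,x)$; (ABT1$_g$) $g(x,y)\leq g(y,x)$; (ABT2) $y\cdot f(x,z)\leq f(x\cdot f(x,y),z)$; (ABT3) $f(x,g(x,-y)\cdot y)\leq y$; (wMIA) $x\neq0,y\neq0\Rightarrow g(x,y)\leq f(x,y)$; (ABTW) $a\neq0\Rightarrow g(a,a)\leq a$; (ABT2$^{\mathrm s}$) $b\neq0\Rightarrow a\leq f(a,b)$. Betweenness algebra: (ABT0),(ABT1$_f$),(ABT1$_g$),(ABT2),(ABT3),(wMIA). Weak betweenness algebra: (ABT0),(ABT1$_f$),(ABT1$_g$),(ABT2),(ABTW). Strong betweenness algebra: (ABT1$_f$),(ABT1$_g$),(ABT3),(wMIA),(ABT2$^{\mathrm s}$). On the ultrafilters of $A$: $Q_f(\mathcal U_1,\mathcal U_2,\mathcal U_3)\iff f[\mathcal U_1\times\mathcal U_3]\subseteq\mathcal U_2$ and $S_g(\mathcal U_1,\mathcal U_2,\mathcal U_3)\iff g[\mathcal U_1\times\mathcal U_3]\cap\mathcal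 U_2\neq\emptyset$. *)

(* A Boolean algebra is a ctbDistrLatticeType (complemented
   distributive lattice with top and bottom) from mathcomp's order library. *)
From mathcomp Require Import all_boot all_order.
Set Implicit Arguments. Unset Strict Implicit. Unset Printing Implicit Defensive.
Import Order.Theory.
Local Open Scope order_scope.

Section PS.
Context {disp : Order.disp_t} {A : ctbDistrLatticeType disp}.

Definition nontrivial : Prop := (\bot : A) != \top.

Definition normal (f : A -> A -> A) : Prop :=
  forall x y, (x = \bot \/ y = \bot) -> f x y = \bot.
Definition additive2 (f : A -> A -> A) : Prop :=
  (forall x x' y, f (x `|` x') y = f x y `|` f x' y) /\
  (forall x y y', f x (y `|` y') = f x y `|` f x y').
Definition conormal (g : A -> A -> A) : Prop :=
  forall x y, (x = \bot \/ y = \bot) -> g x y = \top.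
Definition coadditive2 (g : A -> A -> A) : Prop :=
  (forall x x' y, g (x `|` x') y = g x y `&` g x' y) /\
  (forall x y y', g x (y `|` y') = g x y `&` g x y').

Definition PS_algebra (f g : A -> A -> A) : Prop :=
  [/\ nontrivial, normal f, additive2 f, conormal g & coadditive2 g].

Definition ABT0 (f : A -> A -> A) := forall x, x <= f x x.
Definition ABT1f (f : A -> A -> A) := forall x y, f x y <= f y x.
Definition ABT1g (g : A -> A -> A) := forall x y, g x y <= g y x.
Definition ABT2 (f : A -> A -> A) :=
  forall x y z, y `&` f x z <= f (x `&` f x y) z.
Definition ABT3 (f g : A -> A -> A) :=
  forall x y, f x (g x (~` y) `&` y) <= y.
Definition wMIA (f g : A -> A -> A) :=
  forall x y, x != \bot -> y != \bot -> g x y <= f x y.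
Definition ABTW (g : A -> A -> A) := forall a, a != \bot -> g a a <= a.
Definition ABT2s (f : A -> A -> A) := forall a b, b != \bot -> a <= f a b.

Definition betweenness_algebra (f g : A -> A -> A) : Prop :=
  PS_algebra f g /\ ABT0 f /\ ABT1f f /\ ABT1g g /\ ABT2 f /\ ABT3 f g /\ wMIA f g.
Definition weak_betweenness_algebra (f g : A -> A -> A) : Prop :=
  PS_algebra f g /\ ABT0 f /\ ABT1f f /\ ABT1g g /\ ABT2 f /\ ABTW g.
Definition strong_betweenness_algebra (f g : A -> A -> A) : Prop :=
  PS_algebra f g /\ ABT1f f /\ ABT1g g /\ ABT3 f g /\ wMIA f g /\ ABT2s f.

Definition is_filter (U : A -> Prop) : Prop :=
  [/\ U \top,
      (forall x y, U x -> x <= y -> U y) &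
      (forall x y, U x -> U y -> U (x `&` y))].
Definition is_proper_filter (U : A -> Prop) : Prop :=
  is_filter U /\ ~ U \bot.
Definition is_ultrafilter (U : A -> Prop) : Prop :=
  is_proper_filter U /\
  (forall V : A -> Prop, is_proper_filter V -> (forall x, U x -> V x) -> V = U).

Definition Q_f (f : A -> A -> A) (U1 U2 U3 : A -> Prop) : Prop :=
  forall a b, U1 a -> U3 b -> U2 (f a b).
Definition S_g (g : A -> A -> A) (U1 U2 U3 : A -> Prop) : Prop :=
  exists a b, [/\ U1 a, U3 b & U2 (g a b)].

End PS.

(* Two facts about
   ultrafilters do the work: an ultrafilter contains [x] or [~` x], and an
   ultrafilter contained in a proper filter equals it, so an inclusion between
   ultrafilters is an equality.
   For (iv): if [f a b] is not in [U1], then [x := a `&` ~` f a b] is; [Q_f]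
   puts [b `&` f x \top] in [U2], and ABT2 bounds it by [f (x `&` f x b) \top],
   where [x `&` f x b <= ~` f a b `&` f a b = \bot], so [\bot] lies in [U2].
   For (v): if [c <= b] lies in [U2] but not in [U3], then [g a c `&` ~` c] lies
   in [U3], and ABT3 puts [~` c] in [U2]; hence [U2] is included in [U3].
   For the weak case, ABTW gives [g a b <= g c c <= c] for every [y] in [U1] and
   [c := a `&` b `&` y], hence [U1] is included in [U2]. *)
From mathcomp Require Import all_boot all_order.
From Stdlib Require Import Classical.
Import Order.Theory.
Local Open Scope order_scope.
Set Implicit Arguments. Unset Strict Implicit.

Section Ultrafilters.
Context {disp : Order.disp_t} {A : ctbDistrLatticeType disp}.
Implicit Types (U V : A -> Prop) (x y : A).

Lemma filterT U : is_filter U -> U \top.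
Proof. by case. Qed.

Lemma filterS U x y : is_filter U -> x <= y -> U x -> U y.
Proof. by case=> _ upU _ xy Ux; exact: upU Ux xy. Qed.

Lemma filterI U x y : is_filter U -> U x -> U y -> U (x `&` y).
Proof. by case=> _ _; apply. Qed.

Lemma proper_filter_neq0 U x : is_proper_filter U -> U x -> x != \bot.
Proof. by case=> _ U0 Ux; apply/eqP=> x0; apply: U0; rewrite -x0. Qed.

Lemma proper_filterN U x : is_proper_filter U -> U x -> ~ U (~` x).
Proof.
by case=> FU U0 Ux Ucx; apply: U0; rewrite -(meetxC x); exact: filterI.
Qed.

Lemma ultrafilter_proper U : is_ultrafilter U -> is_proper_filter U.
Proof. by case. Qed.

Lemma ultrafilter_filter U : is_ultrafilter U -> is_filter U.
Proof. by case=> -[]. Qed.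

Lemma ultrafilter_eq U V :
  is_ultrafilter U -> is_proper_filter V -> (forall x, U x -> V x) -> U = V.
Proof. by case=> _ maxU PV UV; rewrite (maxU V). Qed.

Definition adjoin U x : A -> Prop := fun y => exists2 u, U u & u `&` x <= y.

Lemma adjoin_filter U x : is_filter U -> is_filter (adjoin U x).
Proof.
move=> FU; split.
- by exists \top; [exact: filterT | exact: lex1].
- by move=> y z [u Uu ux] yz; exists u => //; exact: le_trans yz.
- move=> y z [u Uu uy] [v Uv vz]; exists (u `&` v); first exact: filterI.
  by rewrite lexI (le_trans _ uy) ?(le_trans _ vz) // leI2 ?leIl ?leIr.
Qed.

Lemma ultrafilter_em U x : is_ultrafilter U -> U x \/ U (~` x).
Proof.
move=> UU; have FU := ultrafilter_filter UU.
case: (classic (adjoin U x \bot)) => [[u Uu ux0] | nUx0]; [right | left].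
  by apply: filterS FU _ Uu; rewrite -disj_leC; apply/eqP/le_anti; rewrite ux0 le0x.
have -> : U = adjoin U x.
  apply: ultrafilter_eq => // [|y Uy]; first by split => //; exact: adjoin_filter.
  by exists y => //; exact: leIl.
by exists \top; [exact: filterT | rewrite meet1x].
Qed.

End Ultrafilters.

Section CanonicalRelations.
Context {disp : Order.disp_t} {A : ctbDistrLatticeType disp}.
Variables f g : A -> A -> A.
Implicit Types (U : A -> Prop) (x y : A).

Lemma additive2_le2 x x' y y' :
  additive2 f -> x <= x' -> y <= y' -> f x y <= f x' y'.
Proof.
case=> fDl fDr xx' yy'; rewrite -(join_r xx') -(join_r yy') fDl !fDr.
by rewrite -joinA leUl.
Qed.

Lemma coadditive2_ge2 x x' y y' :
  coadditive2 g -> x <= x' -> y <= y' -> g x' y' <= g x y.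
Proof.
case=> gDl gDr xx' yy'; rewrite -(join_r xx') -(join_r yy') gDl !gDr.
by rewrite -meetA leIl.
Qed.

Lemma ABT0_Q_f_refl U : additive2 f -> ABT0 f -> is_filter U -> Q_f f U U U.
Proof.
move=> fD f0 FU a b Ua Ub; apply: filterS FU _ (filterI FU Ua Ub).
exact: le_trans (f0 _) (additive2_le2 fD (leIl a b) (leIr b a)).
Qed.

Lemma ABT1f_Q_f_sym U1 U2 U3 :
  ABT1f f -> is_filter U2 -> Q_f f U1 U2 U3 -> Q_f f U3 U2 U1.
Proof. by move=> f1 FU2 Q a b Ua Ub; exact: filterS FU2 (f1 _ _) (Q _ _ Ub Ua). Qed.

Lemma ABT1g_S_g_sym U1 U2 U3 :
  ABT1g g -> is_filter U2 -> S_g g U1 U2 U3 -> S_g g U3 U2 U1.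
Proof.
move=> g1 FU2 [a [b [Ua Ub Ug]]]; exists b, a.
by split; last exact: filterS FU2 (g1 _ _) Ug.
Qed.

Lemma ABT2_Q_f_shift U1 U2 U3 :
  normal f -> additive2 f -> ABT2 f ->
  is_ultrafilter U1 -> is_proper_filter U2 -> is_filter U3 ->
  Q_f f U1 U2 U3 -> Q_f f U1 U1 U2.
Proof.
move=> fN fD f2 UU1 [FU2 U20] FU3 Q a b Ua Ub.
case: (ultrafilter_em (f a b) UU1) => // Ucf; exfalso; apply: U20.
set x := a `&` ~` f a b.
have Ux : U1 x by exact: filterI (ultrafilter_filter UU1) Ua Ucf.
have x_fxb0 : x `&` f x b = \bot.
  apply/le_anti; rewrite le0x andbT -(meetxC (f a b)) meetC.
  exact: leI2 (additive2_le2 fD (leIl _ _) (lexx b)) (leIr _ _).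
rewrite -(fN (x `&` f x b) \top); last by left.
exact: filterS FU2 (f2 x b \top) (filterI FU2 Ub (Q _ _ Ux (filterT FU3))).
Qed.

Lemma ABT3_Q_f_S_g_eq U1 U2 U3 :
  coadditive2 g -> ABT3 f g -> is_ultrafilter U2 -> is_ultrafilter U3 ->
  Q_f f U1 U2 U3 -> S_g g U1 U3 U2 -> U2 = U3.
Proof.
move=> gD f3 UU2 UU3 Q [a [b [Ua Ub Ug]]].
have [PU2 FU3] := (ultrafilter_proper UU2, ultrafilter_filter UU3).
apply: ultrafilter_eq => // [|y Uy]; first exact: ultrafilter_proper.
set c := b `&` y.
have Uc : U2 c by exact: filterI (ultrafilter_filter UU2) Ub Uy.
apply: (filterS FU3 (leIr y b)).
case: (ultrafilter_em c UU3) => // Ucc; exfalso; apply: (proper_filterN PU2 Uc).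
have Ugc : U3 (g a (~` ~` c) `&` ~` c).
  rewrite complK; apply: (filterI FU3) Ucc.
  exact: filterS FU3 (coadditive2_ge2 gD (lexx a) (leIl b y)) Ug.
exact: filterS (ultrafilter_filter UU2) (f3 a (~` c)) (Q _ _ Ua Ugc).
Qed.

Lemma ABT2s_Q_f U1 U2 :
  ABT2s f -> is_filter U1 -> is_proper_filter U2 -> Q_f f U1 U1 U2.
Proof.
move=> f2s FU1 PU2 a b Ua Ub.
exact: filterS FU1 (f2s _ _ (proper_filter_neq0 PU2 Ub)) Ua.
Qed.

Lemma ABTW_S_g_eq U1 U2 :
  coadditive2 g -> ABTW g -> is_ultrafilter U1 -> is_proper_filter U2 ->
  S_g g U1 U2 U1 -> U1 = U2.
Proof.
move=> gD gW UU1 PU2 [a [b [Ua Ub Ug]]]; apply: ultrafilter_eq => // y Uy.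
have [PU1 FU1] := (ultrafilter_proper UU1, ultrafilter_filter UU1).
set c := a `&` b `&` y.
have Uc : U1 c by exact: filterI FU1 (filterI FU1 Ua Ub) Uy.
have [ca cb] : c <= a /\ c <= b by rewrite /c -meetA leIl meetCA leIl.
have g_le_c : g a b <= c.
  exact: le_trans (coadditive2_ge2 gD ca cb) (gW c (proper_filter_neq0 PU1 Uc)).
have FU2 : is_filter U2 by case: PU2.
exact: filterS FU2 (le_trans g_le_c (leIr _ _)) Ug.
Qed.

End CanonicalRelations.

Theorem lemma41 (disp : Order.disp_t) (A : ctbDistrLatticeType disp)
    (f g : A -> A -> A) :
  (betweenness_algebra f g ->
     (forall U, is_ultrafilter U -> Q_f f U U U) /\
     (forall U1 U2 U3, is_ultrafilter U1 -> is_ultrafilter U2 -> is_ultrafilter U3 ->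
        Q_f f U1 U2 U3 -> Q_f f U3 U2 U1) /\
     (forall U1 U2 U3, is_ultrafilter U1 -> is_ultrafilter U2 -> is_ultrafilter U3 ->
        S_g g U1 U2 U3 -> S_g g U3 U2 U1) /\
     (forall U1 U2 U3, is_ultrafilter U1 -> is_ultrafilter U2 -> is_ultrafilter U3 ->
        Q_f f U1 U2 U3 -> Q_f f U1 U1 U2) /\
     (forall U1 U2 U3, is_ultrafilter U1 -> is_ultrafilter U2 -> is_ultrafilter U3 ->
        Q_f f U1 U2 U3 -> S_g g U1 U3 U2 -> U2 = U3)) /\
  (strong_betweenness_algebra f g ->
     forall U1 U2, is_ultrafilter U1 -> is_ultrafilter U2 -> Q_f f U1 U1 U2) /\
  (weak_betweenness_algebra f g ->
     forall U1 U2, is_ultrafilter U1 -> is_ultrafilter U2 ->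
       S_g g U1 U2 U1 -> U1 = U2).
Proof.
split; [|split].
- move=> [[_ fN fD _ gD] [f0 [f1 [g1 [f2 [f3 _]]]]]].
  split; [|split; [|split; [|split]]].
  + by move=> U /ultrafilter_filter; exact: ABT0_Q_f_refl.
  + by move=> U1 U2 U3 _ /ultrafilter_filter FU2 _; exact: ABT1f_Q_f_sym.
  + by move=> U1 U2 U3 _ /ultrafilter_filter FU2 _; exact: ABT1g_S_g_sym.
  + move=> U1 U2 U3 UU1 /ultrafilter_proper PU2 /ultrafilter_filter FU3.
    exact: ABT2_Q_f_shift.
  + by move=> U1 U2 U3 _; exact: ABT3_Q_f_S_g_eq.
- move=> [_ [_ [_ [_ [_ f2s]]]]] U1 U2 /ultrafilter_filter FU1 /ultrafilter_proper PU2.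
  exact: ABT2s_Q_f.
- move=> [[_ _ _ _ gD] [_ [_ [_ [_ gW]]]]] U1 U2 UU1 /ultrafilter_proper PU2.
  exact: ABTW_S_g_eq.
Qed.
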